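(* For every configuration $C$ of the Krivine Abstract Machine, $C \to^{*} \langle \lambda x.t, []\rangle$ for some $x$ and $t$ if and only if $[\![C]\!]$ has a weak observable action on the coname $\overline{b}$ with respect to the empty set of hidden names, i.e., there exist $P', Q, R$ with $[\![C]\!] \Rightarrow P'$ and $P' \xrightarrow{\overline{b}\langle Q\rangle} R$.
   Context: HOcore processes are given by $P,Q ::= a(x).P \mid \overline{a}\langle P\rangle \mid P \parallel Q \mid x \mid 0$, where $a,b,\dots$ are channel names and $x,y,\dots$ are process variables; $a(x).P$ binds $x$ in $P$; parallel composition is associative and commutative with unit $0$. The labelled transition system has labels $\tau$, $\overline{a}\langle P\rangle$ and $a(P)$, with rules: $\overline{a}\langle P\rangle \xrightarrow{\overline{a}\langle P\rangle} 0$; $a(x).Q \xrightarrow{a(P)} Q\{P/x\}$; if $P \xrightarrow{l} P'$ then $P\parallel Q \xrightarrow{l} P'\parallel Q$ (and symmetrically); if $P \xrightarrow{\overline{a}\langle R\rangle} P'$ and $Q \xrightarrow{a(R)} Q'$ then $P \parallel Q \xrightarrow{\tau} P'\parallel Q'$ (and symmetrically). $\Rightarrow$ is the reflexive transitive closure of $\xrightarrow{\tau}$. KAM: terms $t,s ::= x \mid t\,s \mid \lambda x.t$; stacks $\pi ::= t :: \pi \mid []$; configurations $C ::= \langle t, \pi\rangle$ with all terms closed. Transitions: $\langle t\,s, \pi\rangle \to \langle t, s :: \pi\rangle$ and $\langle \lambda x.t, s::\pi\rangle \to \langle t\{s/x\}, \pi\rangle$. Translation (channel names $c, hd, b$; $p$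 a fresh variable): $[\![[]]\!] = \overline{b}\langle 0\rangle$; $[\![t::\pi]\!] = \overline{hd}\langle [\![t]\!]\rangle \parallel \overline{c}\langle [\![\pi]\!]\rangle$; $[\![\langle t,\pi\rangle]\!] = [\![t]\!] \parallel \overline{c}\langle[\![\pi]\!]\rangle$; $[\![t\,s]\!] = c(p).([\![t]\!] \parallel \overline{c}\langle \overline{hd}\langle[\![s]\!]\rangle \parallel \overline{c}\langle p\rangle\rangle)$; $[\![\lambda x.t]\!] = c(p).(hd(x).[\![t]\!] \parallel p)$; $[\![x]\!] = x$. *)

From Stdlib Require Import List Arith Relations.
Import ListNotations.

Definition name := nat.
Definition pvar := nat.

Inductive proc : Type :=
| PInp : name -> pvar -> proc -> proc
| POut : name -> proc -> proc
| PPar : proc -> proc -> proc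
| PVar : pvar -> proc
| PNil : proc.

(* Substitution P{Q/x}.  It respects shadowing; it does not rename binders,
   which is harmless because all processes transmitted in the theorem are
   closed. *)
Fixpoint psubst (P : proc) (Q : proc) (x : pvar) : proc :=
  match P with
  | PInp a y P' => if Nat.eqb x y then PInp a y P' else PInp a y (psubst P' Q x)
  | POut a P' => POut a (psubst P' Q x)
  | PPar P1 P2 => PPar (psubst P1 Q x) (psubst P2 Q x)
  | PVar y => if Nat.eqb x y then Q else PVar y
  | PNil => PNil
  end.

Inductive label : Type :=
| LTau : label
| LOut : name -> proc -> label
| LInp : name -> proc -> label.

Inductive lts : proc -> label -> proc -> Prop :=
| lts_out : forall a P, lts (POut a P) (LOut a P) PNil
| lts_inp : forall a x Q P, lts (PInp a x Q) (LInp a P) (psubst Q P x)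
| lts_parL : forall P Q l P', lts P l P' -> lts (PPar P Q) l (PPar P' Q)
| lts_parR : forall P Q l Q', lts Q l Q' -> lts (PPar P Q) l (PPar P Q')
| lts_comL : forall P Q a R P' Q',
    lts P (LOut a R) P' -> lts Q (LInp a R) Q' -> lts (PPar P Q) LTau (PPar P' Q')
| lts_comR : forall P Q a R P' Q',
    lts P (LInp a R) P' -> lts Q (LOut a R) Q' -> lts (PPar P Q) LTau (PPar P' Q').

Definition wstep (P P' : proc) : Prop :=
  clos_refl_trans proc (fun X Y => lts X LTau Y) P P'.

Definition tvar := nat.

Inductive term : Type :=
| TVar : tvar -> term
| TApp : term -> term -> term
| TLam : tvar -> term -> term.

Fixpoint free_in (x : tvar) (t : term) : Prop :=
  match t with
  | TVar y => x = y
  | TApp t1 t2 => free_in x t1 \/ free_in x t2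
  | TLam y t' => x <> y /\ free_in x t'
  end.

Definition closed (t : term) : Prop := forall x, ~ free_in x t.

(* t{s/x}; s is closed in every use, so no capture can occur *)
Fixpoint tsubst (t : term) (s : term) (x : tvar) : term :=
  match t with
  | TVar y => if Nat.eqb x y then s else TVar y
  | TApp t1 t2 => TApp (tsubst t1 s x) (tsubst t2 s x)
  | TLam y t' => if Nat.eqb x y then TLam y t' else TLam y (tsubst t' s x)
  end.

Definition stack := list term.
Definition config := (term * stack)%type.

Definition closed_config (C : config) : Prop :=
  closed (fst C) /\ Forall closed (snd C).

Inductive kam_step : config -> config -> Prop :=
| kam_push : forall t s pi, kam_step (TApp t s, pi) (t, s :: pi)
| kam_grab : forall x t s pi, kam_step (TLam x t, s :: pi) (tsubst t s x, pi).

Definition kam_star : config -> config -> Prop := clos_refl_trans config kam_step.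

Definition ch_c : name := 0.
Definition ch_hd : name := 1.
Definition ch_b : name := 2.

(* process variables: term variable x is encoded as S x; the fresh variable
   p is 0, hence distinct from every encoded term variable. *)
Definition pv_p : pvar := 0.
Definition pv_of (x : tvar) : pvar := S x.

Fixpoint tr_term (t : term) : proc :=
  match t with
  | TVar x => PVar (pv_of x)
  | TApp t s =>
      PInp ch_c pv_p
        (PPar (tr_term t)
              (POut ch_c (PPar (POut ch_hd (tr_term s)) (POut ch_c (PVar pv_p)))))
  | TLam x t =>
      PInp ch_c pv_p (PPar (PInp ch_hd (pv_of x) (tr_term t)) (PVar pv_p))
  end.

Fixpoint tr_stack (pi : stack) : proc :=
  match pi with
  | [] => POut ch_b PNil
  | t :: pi' => PPar (POut ch_hd (tr_term t)) (POut ch_c (tr_stack pi'))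
  end.

Definition tr_config (C : config) : proc :=
  PPar (tr_term (fst C)) (POut ch_c (tr_stack (snd C))).

From Stdlib Require Import List Relations Permutation.
Import ListNotations.

(* Up to the order of its parallel components, every process reachable from
   [[C]] by tau steps is the image of a state of a slightly refined machine:
   either a translated configuration, or a lambda that has already consumed
   the stack pointer on c and waits for the head of the stack on hd.  On the
   translation, a KAM push is one tau step and a grab is two, and each such
   process has exactly one input component, so its tau step is unique.  The
   only such image exposing the coname b is a lambda waiting on the empty
   stack, i.e. a final configuration <\x.t, []>. *)

Fixpoint components (P : proc) : list proc :=
  match P with
  | PPar P1 P2 => components P1 ++ components P2
  | PNil => []
  | _ => [P]
  end.

Definition components_step (l : label) (P P' : proc) : Prop :=
  match l with
  | LOut a R => Permutation (components P) (POut a R :: components P')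
  | LInp a R => exists x B rest,
      Permutation (components P) (PInp a x B :: rest) /\
      Permutation (components P') (components (psubst B R x) ++ rest)
  | LTau => exists a R x B rest,
      Permutation (components P) (POut a R :: PInp a x B :: rest) /\
      Permutation (components P') (components (psubst B R x) ++ rest)
  end.

Lemma lts_components_step P l P' : lts P l P' -> components_step l P P'.
Proof.
  induction 1 as [a P|a x Q P|P Q l P' _ IH|P Q l Q' _ IH
                 |P Q a R P' Q' _ IHout _ IHinp|P Q a R P' Q' _ IHinp _ IHout]; cbn in *.
  - reflexivity.
  - exists x, Q, []. rewrite app_nil_r. split; reflexivity.
  - destruct l as [|a R|a R]; cbn in IH |- *.
    + destruct IH as (a & R & x & B & rest & HP & HP').
      exists a, R, x, B, (rest ++ components Q).
      split; [rewrite HP | rewrite HP', app_assoc]; reflexivity.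
    + rewrite IH. reflexivity.
    + destruct IH as (x & B & rest & HP & HP').
      exists x, B, (rest ++ components Q).
      split; [rewrite HP | rewrite HP', app_assoc]; reflexivity.
  - destruct l as [|a R|a R]; cbn in IH |- *.
    + destruct IH as (a & R & x & B & rest & HP & HP').
      exists a, R, x, B, (components P ++ rest). split.
      * rewrite HP, <- !Permutation_middle. reflexivity.
      * rewrite HP'. apply Permutation_app_swap_app.
    + rewrite IH. symmetry. apply Permutation_middle.
    + destruct IH as (x & B & rest & HP & HP').
      exists x, B, (components P ++ rest). split.
      * rewrite HP. symmetry. apply Permutation_middle.
      * rewrite HP'. apply Permutation_app_swap_app.
  - destruct IHinp as (x & B & rest & HQ & HQ').
    exists a, R, x, B, (components P' ++ rest). split.
    + rewrite IHout, HQ. cbn. apply perm_skip. symmetry. apply Permutation_middle.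
    + rewrite HQ'. apply Permutation_app_swap_app.
  - destruct IHinp as (x & B & rest & HP & HP').
    exists a, R, x, B, (rest ++ components Q'). split.
    + rewrite IHout, HP. cbn. rewrite perm_swap. apply perm_skip.
      symmetry. apply Permutation_middle.
    + rewrite HP', app_assoc. reflexivity.
Qed.

Lemma lts_out_of_component P a R :
  In (POut a R) (components P) -> exists P', lts P (LOut a R) P'.
Proof.
  induction P as [b y B|b B|P1 IH1 P2 IH2|y|]; cbn; intros Hin.
  - destruct Hin as [H|[]]; discriminate.
  - destruct Hin as [H|[]]. injection H as -> ->. eexists. constructor.
  - apply in_app_or in Hin as [Hin|Hin].
    + destruct (IH1 Hin) as [P1' H]. eexists. apply lts_parL, H.
    + destruct (IH2 Hin) as [P2' H]. eexists. apply lts_parR, H.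
  - destruct Hin as [H|[]]; discriminate.
  - destruct Hin.
Qed.

Lemma lts_inp_of_component P a x B R :
  In (PInp a x B) (components P) -> exists P', lts P (LInp a R) P'.
Proof.
  induction P as [b y C|b C|P1 IH1 P2 IH2|y|]; cbn; intros Hin.
  - destruct Hin as [H|[]]. injection H as -> -> ->. eexists. constructor.
  - destruct Hin as [H|[]]; discriminate.
  - apply in_app_or in Hin as [Hin|Hin].
    + destruct (IH1 Hin) as [P1' H]. eexists. apply lts_parL, H.
    + destruct (IH2 Hin) as [P2' H]. eexists. apply lts_parR, H.
  - destruct Hin as [H|[]]; discriminate.
  - destruct Hin.
Qed.

Lemma lts_tau_of_redex P a x B R :
  In (PInp a x B) (components P) -> In (POut a R) (components P) ->
  exists P', lts P LTau P'.
Proof.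
  induction P as [b y C|b C|P1 IH1 P2 IH2|y|]; cbn; intros Hinp Hout.
  - destruct Hout as [H|[]]; discriminate.
  - destruct Hinp as [H|[]]; discriminate.
  - apply in_app_or in Hout as [Hout|Hout]; apply in_app_or in Hinp as [Hinp|Hinp].
    + destruct (IH1 Hinp Hout) as [P1' H]. eexists. apply lts_parL, H.
    + destruct (lts_out_of_component _ _ _ Hout) as [P1' H1].
      destruct (lts_inp_of_component _ _ _ _ R Hinp) as [P2' H2].
      eexists. eapply lts_comL; eassumption.
    + destruct (lts_out_of_component _ _ _ Hout) as [P2' H2].
      destruct (lts_inp_of_component _ _ _ _ R Hinp) as [P1' H1].
      eexists. eapply lts_comR; eassumption.
    + destruct (IH2 Hinp Hout) as [P2' H]. eexists. apply lts_parR, H.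
  - destruct Hout as [H|[]]; discriminate.
  - destruct Hout.
Qed.

Definition is_output (P : proc) : Prop := exists a R, P = POut a R.

Lemma lts_tau_single_input P P' a x B outs :
  Permutation (components P) (PInp a x B :: outs) -> Forall is_output outs ->
  lts P LTau P' ->
  exists R rest, Permutation outs (POut a R :: rest) /\
    Permutation (components P') (components (psubst B R x) ++ rest).
Proof.
  intros HP Houts Htau.
  destruct (lts_components_step _ _ _ Htau) as (a' & R & x' & B' & rest & Hredex & HP').
  rewrite HP in Hredex.
  assert (Hinp : In (PInp a' x' B') (PInp a x B :: outs))
    by (rewrite Hredex; right; left; reflexivity).
  destruct Hinp as [Hinp|Hinp].
  - injection Hinp as -> -> ->. exists R, rest. split; [|exact HP'].
    rewrite perm_swap in Hredex. exact (Permutation_cons_inv Hredex).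
  - rewrite Forall_forall in Houts.
    destruct (Houts _ Hinp) as (? & ? & ?). discriminate.
Qed.

Lemma lts_tau_exchange P P' a x B R :
  Permutation (components P) [PInp a x B; POut a R] -> lts P LTau P' ->
  Permutation (components P') (components (psubst B R x)).
Proof.
  intros HP Htau.
  assert (Hout : Forall is_output [POut a R]) by (constructor; [exists a, R|]; constructor).
  destruct (lts_tau_single_input _ _ _ _ _ _ HP Hout Htau) as (R' & rest & Houts & HP').
  apply Permutation_length_1_inv in Houts. injection Houts as -> ->.
  rewrite HP', app_nil_r. reflexivity.
Qed.

Lemma lts_tau_has_input P P' :
  lts P LTau P' -> exists a x B, In (PInp a x B) (components P).
Proof.
  intros Htau.
  destruct (lts_components_step _ _ _ Htau) as (a & R & x & B & rest & HP & _).
  exists a, x, B. rewrite HP. right. left. reflexivity.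
Qed.

Lemma components_tr_term t : components (tr_term t) = [tr_term t].
Proof. destruct t; reflexivity. Qed.

Lemma components_tr_stack_outputs pi : Forall is_output (components (tr_stack pi)).
Proof.
  destruct pi; repeat constructor; eexists; eexists; reflexivity.
Qed.

Lemma psubst_tr_term_pv_p t Q : psubst (tr_term t) Q pv_p = tr_term t.
Proof. destruct t; reflexivity. Qed.

(* No closedness is needed: [psubst] and [tsubst] are both capture-permitting
   and the translation commutes with them syntactically. *)
Lemma psubst_tr_term t s x :
  psubst (tr_term t) (tr_term s) (pv_of x) = tr_term (tsubst t s x).
Proof.
  induction t as [y|t1 IH1 t2 IH2|y t IH]; cbn.
  - destruct (Nat.eqb x y); reflexivity.
  - rewrite IH1, IH2. reflexivity.
  - destruct (Nat.eqb x y); cbn; [reflexivity|]. rewrite IH. reflexivity.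
Qed.

Inductive mstate : Type :=
| MEval : config -> mstate
| MGrab : tvar -> term -> stack -> mstate.

Definition mstate_proc (S : mstate) : proc :=
  match S with
  | MEval C => tr_config C
  | MGrab x t pi => PPar (PInp ch_hd (pv_of x) (tr_term t)) (tr_stack pi)
  end.

Definition mstate_config (S : mstate) : config :=
  match S with
  | MEval C => C
  | MGrab x t pi => (TLam x t, pi)
  end.

Inductive mstep : mstate -> mstate -> Prop :=
| mstep_push t s pi : mstep (MEval (TApp t s, pi)) (MEval (t, s :: pi))
| mstep_lam x t pi : mstep (MEval (TLam x t, pi)) (MGrab x t pi)
| mstep_grab x t s pi : mstep (MGrab x t (s :: pi)) (MEval (tsubst t s x, pi)).

Definition mstar : mstate -> mstate -> Prop := clos_refl_trans mstate mstep.

Lemma mstep_deterministic S S1 S2 : mstep S S1 -> mstep S S2 -> S1 = S2.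
Proof. intros H1 H2. destruct H1; inversion H2; reflexivity. Qed.

Lemma mstep_kam_star S S' : mstep S S' -> kam_star (mstate_config S) (mstate_config S').
Proof.
  destruct 1; cbn; [apply rt_step; constructor | apply rt_refl | apply rt_step; constructor].
Qed.

Lemma mstar_kam_star S S' : mstar S S' -> kam_star (mstate_config S) (mstate_config S').
Proof.
  induction 1; [apply mstep_kam_star; assumption | apply rt_refl | eapply rt_trans; eauto].
Qed.

Lemma kam_star_mstar C C' : kam_star C C' -> mstar (MEval C) (MEval C').
Proof.
  induction 1 as [C C' Hstep| |]; [|apply rt_refl|eapply rt_trans; eassumption].
  destruct Hstep.
  - apply rt_step. constructor.
  - eapply rt_trans; apply rt_step; constructor.
Qed.

Notation represents S P := (Permutation (components P) (components (mstate_proc S))).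

Lemma represents_tau_mstep S P P' :
  represents S P -> lts P LTau P' -> exists S', mstep S S' /\ represents S' P'.
Proof.
  intros HP Htau.
  destruct S as [[[y|t s|x t] pi]|x t pi]; cbn in HP.
  - destruct (lts_tau_has_input _ _ Htau) as (a & x & B & Hinp).
    rewrite HP in Hinp. destruct Hinp as [H|[H|[]]]; discriminate.
  - exists (MEval (t, s :: pi)). split; [constructor|].
    rewrite (lts_tau_exchange _ _ _ _ _ _ HP Htau). cbn.
    rewrite !psubst_tr_term_pv_p. reflexivity.
  - exists (MGrab x t pi). split; [constructor|].
    rewrite (lts_tau_exchange _ _ _ _ _ _ HP Htau). cbn.
    rewrite psubst_tr_term_pv_p. reflexivity.
  - destruct (lts_tau_single_input _ _ _ _ _ _ HP
      (components_tr_stack_outputs pi) Htau) as (R & rest & Houts & HP').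
    destruct pi as [|s pi]; cbn in Houts.
    + apply Permutation_length_1_inv in Houts. discriminate.
    + apply Permutation_length_2_inv in Houts as [Houts|Houts];
        [injection Houts as -> -> | discriminate].
      exists (MEval (tsubst t s x, pi)). split; [constructor|].
      rewrite HP', psubst_tr_term. cbn. rewrite components_tr_term. reflexivity.
Qed.

Lemma represents_mstep_tau S S' P :
  represents S P -> mstep S S' -> exists P', lts P LTau P' /\ represents S' P'.
Proof.
  intros HP Hstep.
  assert (Htau : exists P', lts P LTau P').
  { destruct Hstep; cbn in HP; eapply lts_tau_of_redex; rewrite HP; cbn; eauto. }
  destruct Htau as [P' Htau].
  destruct (represents_tau_mstep _ _ _ HP Htau) as (S'' & Hstep' & HP').
  rewrite (mstep_deterministic _ _ _ Hstep Hstep'). eauto.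
Qed.

Lemma represents_wstep_mstar S P P' :
  wstep P P' -> represents S P -> exists S', mstar S S' /\ represents S' P'.
Proof.
  intros HW. revert S. induction HW as [P P' Htau|P|P1 P2 P3 _ IH12 _ IH23]; intros S HP.
  - destruct (represents_tau_mstep _ _ _ HP Htau) as (S' & Hstep & HP').
    exists S'. split; [apply rt_step|]; assumption.
  - exists S. split; [apply rt_refl | exact HP].
  - destruct (IH12 _ HP) as (S2 & H12 & HP2).
    destruct (IH23 _ HP2) as (S3 & H23 & HP3).
    exists S3. split; [eapply rt_trans|]; eassumption.
Qed.

Lemma represents_mstar_wstep S S' P :
  mstar S S' -> represents S P -> exists P', wstep P P' /\ represents S' P'.
Proof.
  intros HS. revert P. induction HS as [S S' Hstep|S|S1 S2 S3 _ IH12 _ IH23]; intros P HP.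
  - destruct (represents_mstep_tau _ _ _ HP Hstep) as (P' & Htau & HP').
    exists P'. split; [apply rt_step|]; assumption.
  - exists P. split; [apply rt_refl | exact HP].
  - destruct (IH12 _ HP) as (P2 & H12 & HP2).
    destruct (IH23 _ HP2) as (P3 & H23 & HP3).
    exists P3. split; [eapply rt_trans|]; eassumption.
Qed.

Lemma represents_barb_b S P Q R :
  represents S P -> lts P (LOut ch_b Q) R -> exists x t, S = MGrab x t [].
Proof.
  intros HP Hout.
  assert (Hin : In (POut ch_b Q) (components (mstate_proc S))).
  { pose proof (lts_components_step _ _ _ Hout) as Hcomp. cbn in Hcomp.
    apply (Permutation_in _ HP). rewrite Hcomp. left. reflexivity. }
  destruct S as [[t pi]|x t [|s pi]]; [|eauto|].
  - destruct t; cbn in Hin; decompose sum Hin; discriminate.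
  - cbn in Hin. decompose sum Hin; discriminate.
Qed.

Lemma represents_grab_nil_barb_b x t P :
  represents (MGrab x t []) P -> exists R, lts P (LOut ch_b PNil) R.
Proof.
  intros HP. apply lts_out_of_component. rewrite HP. cbn. auto.
Qed.

Theorem corollary3p2 : forall C : config, closed_config C ->
  ((exists x t, kam_star C (TLam x t, nil)) <->
   (exists P' Q R, wstep (tr_config C) P' /\ lts P' (LOut ch_b Q) R)).
Proof.
  intros C _. split.
  - intros (x & t & Hkam).
    assert (Hgrab : mstar (MEval C) (MGrab x t [])).
    { eapply rt_trans; [apply kam_star_mstar, Hkam | apply rt_step; constructor]. }
    destruct (represents_mstar_wstep _ _ (tr_config C) Hgrab (Permutation_refl _))
      as (P' & HW & HP').
    destruct (represents_grab_nil_barb_b _ _ _ HP') as [R Hout].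
    exists P', PNil, R. split; assumption.
  - intros (P' & Q & R & HW & Hout).
    destruct (represents_wstep_mstar (MEval C) _ _ HW (Permutation_refl _)) as (S & HS & HP').
    destruct (represents_barb_b _ _ _ _ HP' Hout) as (x & t & ->).
    exists x, t. exact (mstar_kam_star _ _ HS).
Qed.
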